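(* Let $\mathbb{X}$ be a finite-dimensional real Banach space. Then $\operatorname{Ext}B_{\mathbb{X}}$ is a $\mathcal{K}$-set: every linear operator $T:\mathbb{X}\to\mathbb{X}$ that preserves Birkhoff–James orthogonality at each extreme point of $B_{\mathbb{X}}$ satisfies $\|Tx\|=\lambda\|x\|$ for all $x\in\mathbb{X}$, for some constant $\lambda\ge0$.
   Context: $u\perp_B v$ means $\|u+\lambda v\|\ge\|u\|$ for all real $\lambda$; $T$ preserves Birkhoff–James orthogonality at $x$ if $x\perp_B w\Rightarrow Tx\perp_B Tw$ for all $w$. $\operatorname{Ext}B_{\mathbb{X}}$ is the set of extreme points of the closed unit ball. A set $A\subseteq S_{\mathbb{X}}$ is a $\mathcal{K}$-set if every bounded linear $T:\mathbb{X}\to\mathbb{X}$ preserving Birkhoff–James orthogonality at each point of $A$ is a scalar multiple of an isometry. *)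

From HB Require Import structures.
From mathcomp Require Import all_boot all_order all_algebra.
From mathcomp Require Import reals.
Set Implicit Arguments. Unset Strict Implicit. Unset Printing Implicit Defensive.
Import Order.TTheory GRing.Theory Num.Theory.
Local Open Scope ring_scope.

(* A finite-dimensional real Banach space is (isometric to) R^n equipped with
   an arbitrary norm N; we model X as 'rV[R]_n with a norm function N. *)
Definition is_norm (R : realType) (n : nat) (N : 'rV[R]_n -> R) : Prop :=
  [/\ (forall x, 0 <= N x),
      (forall x, N x = 0 -> x = 0),
      (forall (a : R) x, N (a *: x) = `|a| * N x) &
      (forall x y, N (x + y) <= N x + N y)].

Definition bj_orth (R : realType) (n : nat) (N : 'rV[R]_n -> R) (u v : 'rV[R]_n) : Prop :=
  forall l : R, N u <= N (u + l *: v).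

Definition preserves_bj_at (R : realType) (n : nat) (N : 'rV[R]_n -> R)
  (T : 'rV[R]_n -> 'rV[R]_n) (x : 'rV[R]_n) : Prop :=
  forall w, bj_orth N x w -> bj_orth N (T x) (T w).

Definition ext_ball (R : realType) (n : nat) (N : 'rV[R]_n -> R) (x : 'rV[R]_n) : Prop :=
  N x <= 1 /\
  forall (y z : 'rV[R]_n) (t : R), N y <= 1 -> N z <= 1 -> 0 < t -> t < 1 ->
    x = t *: y + (1 - t) *: z -> y = z.

(* Write h x := N (T x), a seminorm.  For a direction c let E c be an extreme
   point of the unit ball that maximises x . c on the ball and, among those
   maximisers, maximises h.  If z . c > 0, the vector w := (E c . c / z . c) z - E c
   satisfies w . c = 0, so E c is Birkhoff-James orthogonal to w; preservation
   of orthogonality at E c gives h (E c) <= h (E c + w), i.e.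
   h (E c) (z . c) <= h z (E c . c).
   Applied along a fine subdivision a = c_0, ..., c_k = b of a segment, this
   bounds h (E c_i) from below by h (E c_(i+1)) up to a loss which, by the
   convexity of the support function c |-> E c . c, telescopes to O(1/k); hence
   c |-> h (E c) is constant on c <> 0.  Finally every unit vector is a limit of
   support points q of the ball, where h q = h (E c) by the same inequality, so
   h is constant on the unit sphere. *)
From HB Require Import structures.
From mathcomp Require Import all_boot all_order all_algebra.
From mathcomp Require Import reals.
From mathcomp Require Import all_classical all_reals all_analysis.
From mathcomp Require Import ring lra.
Import Order.TTheory GRing.Theory Num.Theory.
Import numFieldNormedType.Exports.
Set Implicit Arguments. Unset Strict Implicit. Unset Printing Implicit Defensive.
Local Open Scope ring_scope.
Local Open Scope classical_set_scope.

Lemma ler_of_forall_natV (R : realType) (x y C : R) : 0 <= C ->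
  (forall k : nat, (0 < k)%N -> x - C / k%:R <= y) -> x <= y.
Proof.
move=> C0 H; apply/ler_addgt0Pr => e e0.
pose k := (Num.Def.archi_bound (C / e)).+1.
have k0 : 0 < k%:R :> R by rewrite ltr0n.
have Ck : C / e < k%:R.
  rewrite /k -natr1; apply: lt_le_trans (archi_boundP _) _.
    by rewrite divr_ge0 // ltW.
  by rewrite lerDl.
have Cke : C / k%:R <= e.
  by rewrite ler_pdivrMr // mulrC -ler_pdivrMr // ltW.
have := H k isT; lra.
Qed.

Lemma prod_lower_bound (R : realType) (k : nat) (u d : nat -> R) (mu : R) :
  0 < mu -> (forall i, 0 <= u i) -> (forall i, 0 <= d i) ->
  (forall i, (i < k)%N -> u i * (1 - d i / mu) <= u i.+1) ->
  u 0%N * (1 - (\sum_(i < k) d i) / mu) <= u k.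
Proof.
move=> mu0 u0 d0; elim: k => [|k IH] H.
  by rewrite big_ord0 mul0r subr0 mulr1.
have IH' := IH (fun i hi => H i (ltnW hi)).
have Hk := H k (ltnSn k).
rewrite big_ord_recr /= mulrDl.
set x := (\sum_(i < k) d i) / mu in IH' *; set y := d k / mu in Hk *.
have x0 : 0 <= x by rewrite divr_ge0 ?sumr_ge0 // ltW.
have y0 : 0 <= y by rewrite divr_ge0 // ltW.
have := u0 0%N; have := u0 k; have := u0 k.+1 => a b c.
have [y1|y1] := lerP y 1; last first.
  by apply: le_trans a; apply: mulr_ge0_le0 => //; lra.
apply: le_trans Hk.
have h1 : u 0%N * (1 - x) * (1 - y) <= u k * (1 - y) by rewrite ler_wpM2r // subr_ge0.
have h2 : 0 <= u 0%N * x * y by rewrite mulr_ge0 // mulr_ge0.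
apply: le_trans h1; rewrite -subr_ge0.
by have -> : u 0%N * (1 - x) * (1 - y) - u 0%N * (1 - (x + y)) = u 0%N * x * y by ring.
Qed.

Section Seminorm.
Variables (R : realType) (n : nat).
Local Notation V := 'rV[R]_n.

Definition seminorm (f : V -> R) :=
  [/\ forall x, 0 <= f x, forall a x, f (a *: x) = `|a| * f x &
      forall x y, f (x + y) <= f x + f y].

Variable f : V -> R.
Hypothesis hf : seminorm f.

Lemma seminorm_ge0 x : 0 <= f x. Proof. by case: hf. Qed.
Lemma seminormZ a x : f (a *: x) = `|a| * f x. Proof. by case: hf. Qed.
Lemma seminormD x y : f (x + y) <= f x + f y. Proof. by case: hf. Qed.

Lemma seminorm0 : f 0 = 0.
Proof. by have := seminormZ 0 0; rewrite scale0r normr0 mul0r. Qed.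

Lemma seminormN x : f (- x) = f x.
Proof. by rewrite -scaleN1r seminormZ normrN normr1 mul1r. Qed.

Lemma seminorm_distB x y : `|f x - f y| <= f (x - y).
Proof.
rewrite ler_norml; apply/andP; split.
  have := seminormD (y - x) x; rewrite subrK -opprB seminormN; lra.
have := seminormD (x - y) y; rewrite subrK; lra.
Qed.

Lemma seminorm_sum (F : 'I_n -> V) : f (\sum_(i < n) F i) <= \sum_(i < n) f (F i).
Proof.
elim/big_rec2: _ => [|i y1 y2 _ Hy]; first by rewrite seminorm0.
by apply: le_trans (seminormD _ _) _; rewrite lerD2l.
Qed.

Lemma seminorm_convex t x y : 0 <= t <= 1 ->
  f (t *: x + (1 - t) *: y) <= t * f x + (1 - t) * f y.
Proof.
move=> /andP[t0 t1]; apply: le_trans (seminormD _ _) _.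
by rewrite !seminormZ ger0_norm // ger0_norm // subr_ge0.
Qed.

End Seminorm.

Section Dot.
Variables (R : realType) (n : nat).
Local Notation V := 'rV[R]_n.

Definition dot (x y : V) := \sum_(j < n) x 0 j * y 0 j.

Lemma dotC x y : dot x y = dot y x.
Proof. by apply: eq_bigr => j _; rewrite mulrC. Qed.

Lemma dotDZl a x y z : dot (a *: x + y) z = a * dot x z + dot y z.
Proof.
rewrite /dot mulr_sumr -big_split; apply: eq_bigr => j _; rewrite !mxE.
by rewrite mulrDl mulrA.
Qed.

Lemma dot0l z : dot 0 z = 0.
Proof. by rewrite /dot big1 // => j _; rewrite mxE mul0r. Qed.

Lemma dotZl a x z : dot (a *: x) z = a * dot x z.
Proof. by have := dotDZl a x 0 z; rewrite addr0 dot0l addr0. Qed.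

Lemma dotDl x y z : dot (x + y) z = dot x z + dot y z.
Proof. by rewrite -[x]scale1r dotDZl mul1r scale1r. Qed.

Lemma dotNl x z : dot (- x) z = - dot x z.
Proof. by rewrite -scaleN1r dotZl mulN1r. Qed.

Lemma dotBl x y z : dot (x - y) z = dot x z - dot y z.
Proof. by rewrite dotDl dotNl. Qed.

Lemma dot0r z : dot z 0 = 0. Proof. by rewrite dotC dot0l. Qed.

Lemma dotZr a x z : dot x (a *: z) = a * dot x z.
Proof. by rewrite dotC dotZl dotC. Qed.

Lemma dotDr x y z : dot z (x + y) = dot z x + dot z y.
Proof. by rewrite dotC dotDl !(dotC z). Qed.

Lemma dotNr x z : dot x (- z) = - dot x z.
Proof. by rewrite dotC dotNl dotC. Qed.

Lemma dotBr x y z : dot z (x - y) = dot z x - dot z y.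
Proof. by rewrite dotDr dotNr. Qed.

Lemma dotxx_ge0 x : 0 <= dot x x.
Proof. by apply: sumr_ge0 => j _; rewrite -expr2 sqr_ge0. Qed.

Lemma dotxx_eq0 x : dot x x = 0 -> x = 0.
Proof.
move=> /eqP; rewrite psumr_eq0; last by move=> j _; rewrite -expr2 sqr_ge0.
move=> /allP H; apply/rowP => j; rewrite mxE.
by have /(_ (mem_index_enum j)) := H j; rewrite -expr2 sqrf_eq0 => /eqP.
Qed.

Lemma dotxx_gt0 x : x != 0 -> 0 < dot x x.
Proof.
move=> x0; rewrite lt_def dotxx_ge0 andbT.
by apply/eqP => /dotxx_eq0 /eqP; rewrite (negbTE x0).
Qed.

Lemma dot_convex_comb t y z :
  dot (t *: y + (1 - t) *: z) (t *: y + (1 - t) *: z) =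
  t * dot y y + (1 - t) * dot z z - t * (1 - t) * dot (y - z) (y - z).
Proof. rewrite dotBl !dotBr !(dotDl, dotDr, dotZl, dotZr) (dotC z y); ring. Qed.

Lemma dot_add_scale u w t :
  dot (u + t *: w) (u + t *: w) = dot u u + 2 * t * dot u w + t * t * dot w w.
Proof. rewrite !(dotDl, dotDr, dotZl, dotZr) (dotC w u); ring. Qed.

Definition enorm (x : V) := Num.sqrt (dot x x).

Lemma coord_le_enorm (x : V) i : `|x 0 i| <= enorm x.
Proof.
rewrite -sqrtr_sqr ler_sqrt ?dotxx_ge0 // /dot (bigD1 i) //= expr2 lerDl.
by apply: sumr_ge0 => j _; rewrite -expr2 sqr_ge0.
Qed.

Lemma coord_le_mxnorm (x : V) i : `|x 0 i| <= `|x|.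
Proof.
rewrite [leRHS]/Num.Def.normr /= mx_normrE; apply/bigmax_geP; right => /=.
by exists (0, i).
Qed.

Lemma normr_dot_le (z w : V) : `|dot z w| <= n%:R * `|z| * `|w|.
Proof.
apply: le_trans (ler_norm_sum _ _ _) _.
have -> : n%:R = \sum_(j < n) (1 : R) by rewrite sumr_const card_ord.
rewrite -mulrA mulr_suml; apply: ler_sum => j _; rewrite normrM mul1r.
by apply: ler_pM => //; apply: coord_le_mxnorm.
Qed.

Lemma seminorm_le_coord (f : V -> R) (g : V -> R) : seminorm f ->
  (forall (x : V) i, `|x 0 i| <= g x) -> forall x, f x <= (\sum_(j < n) f 'e_j) * g x.
Proof.
move=> hf hg x; rewrite {1}(row_sum_delta x).
apply: le_trans (seminorm_sum hf _) _.
rewrite mulr_suml; apply: ler_sum => j _.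
by rewrite seminormZ // mulrC ler_wpM2l ?seminorm_ge0.
Qed.

End Dot.

Section Topology.
Variables (R : realType) (n : nat).
Local Notation V := 'rV[R]_n.

Lemma continuous_of_local_lipschitz (f : V -> R) :
  (forall x, exists2 K, 0 < K &
     forall y, `|y - x| <= 1 -> `|f y - f x| <= K * `|y - x|) ->
  continuous f.
Proof.
move=> H x; have [K K0 HK] := H x.
apply/(@cvgrPdist_le _ _ _ (nbhs x) (nbhs_filter x)) => e e0.
rewrite -(@nbhs_nbhs_norm R V); exists (Num.min 1 (e / K)) => /=.
  by rewrite lt_min ltr01 divr_gt0.
move=> y /=; rewrite lt_min => /andP[h1 h2].
have h3 : `|f y - f x| <= K * `|y - x| by apply: HK; rewrite distrC ltW.
rewrite distrC; apply: le_trans h3 _.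
by rewrite -ler_pdivlMl // mulrC distrC ltW.
Qed.

Lemma seminorm_continuous (f : V -> R) : seminorm f -> continuous f.
Proof.
move=> hf; apply: continuous_of_local_lipschitz => x.
exists ((\sum_(j < n) f 'e_j) + 1).
  by apply: ltr_wpDl => //; apply: sumr_ge0 => j _; exact: seminorm_ge0.
move=> y _; apply: le_trans (seminorm_distB hf y x) _.
apply: le_trans (seminorm_le_coord hf (@coord_le_mxnorm _ _) _) _.
by rewrite ler_wpM2r // lerDl.
Qed.

Lemma dotl_continuous (c : V) : continuous (fun x : V => dot x c).
Proof.
apply: continuous_of_local_lipschitz => x.
exists (n%:R * `|c| + 1); first by apply: ltr_wpDl => //; apply: mulr_ge0.
move=> y _; rewrite -dotBl; apply: le_trans (normr_dot_le _ _) _.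
by rewrite mulrAC ler_wpM2r // lerDl.
Qed.

Lemma sqdist_continuous (p : V) : continuous (fun x : V => dot (x - p) (x - p)).
Proof.
apply: continuous_of_local_lipschitz => x.
exists (n%:R * (`|x - p| * 2 + 1) + 1).
  by apply: ltr_wpDl => //; apply: mulr_ge0 => //; apply: addr_ge0 => //; apply: mulr_ge0.
move=> y hy.
have -> : dot (y - p) (y - p) - dot (x - p) (x - p) = dot (y - x) ((y - p) + (x - p)).
  rewrite !(dotBl, dotBr, dotDr, dotDl) (dotC x y) (dotC p y) (dotC p x); ring.
apply: le_trans (normr_dot_le _ _) _.
rewrite mulrAC ler_wpM2r //.
have h : `|(y - p) + (x - p)| <= `|x - p| * 2 + 1.
  have -> : (y - p) + (x - p) = (y - x) + (x - p) *+ 2.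
    by rewrite mulr2n; apply/rowP => j; rewrite !mxE /=; ring.
  apply: le_trans (ler_normD _ _) _.
  by rewrite normrMn mulr_natr addrC lerD2l.
apply: le_trans (ler_wpM2l _ h) _ => //.
by rewrite lerDl.
Qed.

Lemma compact_argmax (A : set V) (f : V -> R) : compact A -> A !=set0 -> continuous f ->
  exists2 c, A c & forall x, A x -> f x <= f c.
Proof.
move=> cA A0 cf.
have [c cA' H] := compact_EVT_max A0 cA (continuous_subspaceT cf).
by exists c; [rewrite inE in cA'|move=> x Ax; apply: H; rewrite inE].
Qed.

Lemma compact_argmin (A : set V) (f : V -> R) : compact A -> A !=set0 -> continuous f ->
  exists2 c, A c & forall x, A x -> f c <= f x.
Proof.
move=> cA A0 cf.
have [c cA' H] := compact_EVT_min A0 cA (continuous_subspaceT cf).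
by exists c; [rewrite inE in cA'|move=> x Ax; apply: H; rewrite inE].
Qed.

Lemma closed_level_set (f : V -> R) r : continuous f -> closed [set x | f x = r].
Proof.
move=> cf; apply: (@preimage_closed _ _ f [set y | y = r]) => [x _|].
  exact: cf.
exact: closed_eq.
Qed.

Lemma closed_sublevel_set (f : V -> R) r : continuous f -> closed [set x | f x <= r].
Proof.
move=> cf; apply: (@preimage_closed _ _ f [set y | y <= r]) => [x _|].
  exact: cf.
exact: closed_le.
Qed.

Lemma closed_bounded_mx_compact (A : set V) K : closed A ->
  (forall x, A x -> `|x| <= K) -> compact A.
Proof.
move=> cA HK; apply: bounded_closed_compact => //.
exists K; split; first exact: num_real.
by move=> M hM x Ax /=; apply: le_trans (HK x Ax) _; exact: ltW.
Qed.

End Topology.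

Section UnitBall.
Variables (R : realType) (n : nat).
Local Notation V := 'rV[R]_n.
Variable N : V -> R.
Hypothesis hN : is_norm N.

Lemma norm_seminorm : seminorm N.
Proof. by case: hN. Qed.

Lemma norm_gt0 x : x != 0 -> 0 < N x.
Proof.
case: hN => _ N0 _ _ x0; rewrite lt_def (seminorm_ge0 norm_seminorm) andbT.
by apply/eqP => /N0 /eqP; rewrite (negbTE x0).
Qed.

Lemma norm_normalize x : x != 0 -> N ((N x)^-1 *: x) = 1.
Proof.
move=> x0; rewrite (seminormZ norm_seminorm) ger0_norm.
  by rewrite mulVf // gt_eqF // norm_gt0.
by rewrite invr_ge0 (seminorm_ge0 norm_seminorm).
Qed.

Lemma mxnorm_le_norm : exists2 K, 0 < K & forall x : V, `|x| <= K * N x.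
Proof.
have [[u1 hu1]|nS] := pselect (exists u : V, `|u| = 1); last first.
  exists 1 => // x; have [->|x0] := eqVneq x 0.
    by rewrite normr0 mul1r (seminorm_ge0 norm_seminorm).
  exfalso; apply: nS; exists (`|x|^-1 *: x).
  by rewrite normrZ normrV ?unitfE ?normr_eq0 // normr_id mulVf // normr_eq0.
pose S := [set x : V | `|x| = 1].
have cS : compact S.
  apply: (@closed_bounded_mx_compact _ _ _ 1); last by move=> x ->.
  exact: closed_level_set norm_continuous.
have [u Su Hu] := compact_argmin cS (ex_intro _ u1 hu1)
  (seminorm_continuous norm_seminorm).
have u0 : u != 0.
  by apply/eqP => u0; move: Su; rewrite /S /= u0 normr0 => /eqP; rewrite eq_sym oner_eq0.
exists (N u)^-1 => [|x]; first by rewrite invr_gt0 norm_gt0.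
have [->|x0] := eqVneq x 0; first by rewrite normr0 (seminorm0 norm_seminorm) mulr0.
have nx : 0 < `|x| by rewrite normr_gt0.
have := Hu (`|x|^-1 *: x).
rewrite /S /= normrZ normrV ?unitfE ?normr_eq0 // normr_id mulVf ?normr_eq0 //.
rewrite (seminormZ norm_seminorm) normrV ?unitfE ?normr_eq0 // normr_id.
move=> /(_ erefl); rewrite ler_pdivlMl // => H.
by rewrite mulrC ler_pdivlMr ?norm_gt0.
Qed.

Lemma compact_unit_ball : compact [set x : V | N x <= 1].
Proof.
have [K K0 HK] := mxnorm_le_norm.
apply: (@closed_bounded_mx_compact _ _ _ K).
  exact: closed_sublevel_set (seminorm_continuous norm_seminorm).
by move=> x Bx; apply: le_trans (HK x) _; rewrite -[leRHS]mulr1 ler_wpM2l // ltW.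
Qed.

Lemma unit_ball_dot_bounded (w : V) :
  exists2 S, 0 <= S & forall x, N x <= 1 -> `|dot x w| <= S.
Proof.
have [K K0 HK] := mxnorm_le_norm.
exists (n%:R * K * `|w|) => [|x Nx]; first by rewrite !mulr_ge0 // ltW.
apply: le_trans (normr_dot_le _ _) _; rewrite ler_wpM2r // ler_wpM2l //.
by apply: le_trans (HK x) _; rewrite -[leRHS]mulr1 ler_wpM2l // ltW.
Qed.

Lemma dot_le_norm_of_ball (c : V) m : (forall x, N x <= 1 -> dot x c <= m) ->
  forall x, dot x c <= m * N x.
Proof.
move=> H x; have [->|x0] := eqVneq x 0.
  by rewrite dot0l (seminorm0 norm_seminorm) mulr0.
have := H ((N x)^-1 *: x); rewrite norm_normalize // lexx => /(_ isT).
by rewrite dotZl ler_pdivrMl ?norm_gt0 // mulrC.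
Qed.

Lemma support_value_gt0 (c : V) m : c != 0 -> (forall x, N x <= 1 -> dot x c <= m) ->
  0 < m.
Proof.
move=> c0 H; have Nc : N ((N c)^-1 *: c) <= 1 by rewrite norm_normalize.
apply: lt_le_trans (H _ Nc).
by rewrite dotZl mulr_gt0 ?invr_gt0 ?norm_gt0 ?dotxx_gt0.
Qed.

Lemma projection_supports (p q : V) : N q <= 1 ->
  (forall x, N x <= 1 -> dot (q - p) (q - p) <= dot (x - p) (x - p)) ->
  forall x, N x <= 1 -> dot x (p - q) <= dot q (p - q).
Proof.
move=> Bq Hq x Bx.
set D := dot (x - q) (x - q); set al := dot (x - q) (p - q).
suff : al <= 0 by rewrite /al dotBl subr_le0.
have D0 : 0 <= D := dotxx_ge0 _.
have key t : 0 < t -> t <= 1 -> 2 * al <= t * D.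
  move=> t0 t1; pose y := q + t *: (x - q).
  have By : N y <= 1.
    have -> : y = t *: x + (1 - t) *: q.
      by rewrite /y scalerBr scalerBl scale1r; apply/rowP => j; rewrite !mxE /=; ring.
    apply: le_trans (seminorm_convex norm_seminorm (t:=t) x q _) _; first by rewrite ltW.
    nra.
  have := Hq y By.
  have -> : y - p = (q - p) + t *: (x - q) by rewrite /y addrAC.
  rewrite dot_add_scale.
  have -> : dot (q - p) (x - q) = - al by rewrite /al dotC -dotNr opprB.
  rewrite -/D => H.
  have : t * (2 * al) <= t * (t * D) by nra.
  by rewrite ler_pM2l.
rewrite leNgt; apply/negP => al0.
have Dal : 0 < D + al by lra.
have := key (al / (D + al)) (divr_gt0 al0 Dal).
rewrite ler_pdivrMr // mul1r lerDr D0 => /(_ isT) H.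
have := ler_wpM2r (ltW Dal) H.
have -> : al / (D + al) * D * (D + al) = al * D * ((D + al) / (D + al)) by ring.
rewrite divff ?gt_eqF // mulr1 => H2.
nra.
Qed.

Lemma exists_support_point_near (z : V) eps : N z = 1 -> 0 < eps ->
  exists q c, [/\ c != 0, N q <= 1, (forall x, N x <= 1 -> dot x c <= dot q c)
                & enorm ((1 + eps) *: z - q) <= eps * enorm z].
Proof.
move=> Nz eps0; set p := (1 + eps) *: z.
have B0 : [set x : V | N x <= 1] !=set0.
  by exists 0; rewrite /= (seminorm0 norm_seminorm).
have [q Bq Hq] := compact_argmin compact_unit_ball B0 (sqdist_continuous (p:=p)).
exists q, (p - q); split => //.
- apply/eqP => /eqP; rewrite subr_eq0 => /eqP pq; move: Bq.
  rewrite /= -pq /p (seminormZ norm_seminorm) Nz mulr1 ger0_norm; lra.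
- exact: projection_supports.
have -> : p - q = - (q - p) by rewrite opprB.
rewrite /enorm dotNl dotNr opprK.
apply: (@le_trans _ _ (Num.sqrt (dot (z - p) (z - p)))).
  by rewrite ler_sqrt ?dotxx_ge0 //; apply: Hq; rewrite /= Nz.
have -> : z - p = (- eps) *: z.
  by rewrite /p scalerDl scale1r opprD addrA subrr add0r scaleNr.
rewrite dotZl dotZr mulrA -expr2 sqrtrM; last exact: sqr_ge0.
by rewrite sqrtr_sqr normrN (ger0_norm (ltW eps0)).
Qed.

Lemma ext_ball_of_sqnorm_max (A : set V) e :
  (forall y z t, N y <= 1 -> N z <= 1 -> 0 < t -> t < 1 ->
     A (t *: y + (1 - t) *: z) -> A y /\ A z) ->
  N e <= 1 -> A e -> (forall x, A x -> dot x x <= dot e e) -> ext_ball N e.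
Proof.
move=> Aface Be Ae He; split=> // y z t Ny Nz t0 t1 ey.
have [Ay Az] : A y /\ A z by apply: (Aface y z t) => //; rewrite -ey.
have qe := dot_convex_comb t y z; rewrite -ey in qe.
have h1 : t * dot y y <= t * dot e e by rewrite ler_pM2l // He.
have h2 : (1 - t) * dot z z <= (1 - t) * dot e e by rewrite ler_pM2l ?subr_gt0 // He.
have tt : 0 < t * (1 - t) by rewrite mulr_gt0 // subr_gt0.
have : dot (y - z) (y - z) <= 0 by rewrite -(pmulr_rle0 _ tt); lra.
move=> yz; have /dotxx_eq0/eqP : dot (y - z) (y - z) = 0.
  by apply/le_anti; rewrite yz dotxx_ge0.
by rewrite subr_eq0 => /eqP.
Qed.

End UnitBall.

Section FacePeak.
Variables (R : realType) (n : nat).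
Local Notation V := 'rV[R]_n.
Variable N : V -> R.
Hypothesis hN : is_norm N.
Variable T : {linear V -> V}.

Lemma norm_linear_seminorm : seminorm (fun x => N (T x)).
Proof.
have hs := norm_seminorm hN; split => [x|a x|x y].
- exact: seminorm_ge0 hs _.
- by rewrite linearZ (seminormZ hs).
- by rewrite linearD (seminormD hs).
Qed.

Definition face_peak (c e : V) :=
  [/\ N e <= 1, (forall x, N x <= 1 -> dot x c <= dot e c), ext_ball N e &
      (forall x, N x <= 1 -> dot x c = dot e c -> N (T x) <= N (T e))].

Lemma exists_face_peak c : exists e, face_peak c e.
Proof.
have hs := norm_linear_seminorm.
have B0 : [set x : V | N x <= 1] !=set0.
  by exists 0; rewrite /= (seminorm0 (norm_seminorm hN)).
have [e1 Be1 He1] := compact_argmax (compact_unit_ball hN) B0 (dotl_continuous (c:=c)).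
pose F := [set x : V | N x <= 1] `&` [set x | dot x c = dot e1 c].
have cF : compact F.
  exact: compact_closedI (compact_unit_ball hN) (closed_level_set (dotl_continuous (c:=c))).
have [e2 Fe2 He2] := compact_argmax cF (ex_intro _ e1 (conj Be1 erefl))
  (seminorm_continuous hs).
pose A := F `&` [set x | N (T x) = N (T e2)].
have cA : compact A := compact_closedI cF (closed_level_set (seminorm_continuous hs)).
have [e Ae He] := compact_argmax cA (ex_intro _ e2 (conj Fe2 erefl))
  (sqdist_continuous (p:=0)).
have [[Be Fe] Te] := Ae; rewrite /= in Be Fe Te.
exists e; split => //.
- by move=> x Bx; rewrite Fe; apply: He1.
- apply: (ext_ball_of_sqnorm_max (A := A)) => // [y z t Ny Nz t0 t1 [[_ Fyz] Tyz]|x Ax].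
    have hy := He1 y Ny; have hz := He1 z Nz.
    rewrite /= dotDl !dotZl in Fyz.
    have dy : dot y c = dot e1 c by nra.
    have dz : dot z c = dot e1 c by nra.
    have hy' := He2 y (conj Ny dy); have hz' := He2 z (conj Nz dz).
    have hc : N (T (t *: y + (1 - t) *: z)) <= t * N (T y) + (1 - t) * N (T z).
      by apply: (seminorm_convex hs); rewrite !ltW.
    rewrite /= in hy' hz' Tyz; rewrite Tyz in hc.
    by split; split => //=; nra.
  by have := He x Ax; rewrite !subr0.
- by move=> x Bx dx; rewrite Te; apply: He2; split; rewrite //= dx Fe.
Qed.

Lemma face_peak_ratio c e z : face_peak c e -> preserves_bj_at N T e ->
  N (T e) * dot z c <= N (T z) * dot e c.
Proof.
move=> [Be Hmax ext _] hTe.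
have hs := norm_linear_seminorm.
have [zc|zc] := lerP (dot z c) 0.
  apply: (@le_trans _ _ 0); first by apply: mulr_ge0_le0 => //; exact: seminorm_ge0 hs _.
  apply: mulr_ge0; first exact: seminorm_ge0 hs _.
  by rewrite -(dot0l c); apply: Hmax; rewrite (seminorm0 (norm_seminorm hN)).
have c0 : c != 0 by apply: contraTneq zc => ->; rewrite dot0r ltxx.
have m0 := support_value_gt0 hN c0 Hmax.
pose w := (dot e c / dot z c) *: z - e.
have wc : dot w c = 0.
  by rewrite /w dotBl dotZl mulrAC -mulrA divff ?gt_eqF // mulr1 subrr.
have orth : bj_orth N e w.
  move=> l; apply: le_trans Be _.
  have := dot_le_norm_of_ball hN Hmax (e + l *: w).
  by rewrite dotDl dotZl wc mulr0 addr0 -{1}[dot e c]mulr1 ler_pM2l.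
have := hTe w orth 1; rewrite scale1r -linearD /w addrC subrK linearZ.
rewrite (seminormZ (norm_seminorm hN)) ger0_norm; last by rewrite divr_ge0 // ltW.
have -> : dot e c / dot z c * N (T z) = N (T z) * dot e c / dot z c by ring.
by rewrite ler_pdivlMr.
Qed.

Lemma face_peak_support_value c e q : face_peak c e -> preserves_bj_at N T e ->
  c != 0 -> N q <= 1 -> (forall x, N x <= 1 -> dot x c <= dot q c) ->
  N (T q) = N (T e).
Proof.
move=> Pe hTe c0 Bq Hq; have [Be Hmax _ Hface] := Pe.
have dqe : dot q c = dot e c by apply/le_anti; rewrite Hmax // Hq.
have := face_peak_ratio q Pe hTe; rewrite dqe.
rewrite ler_pM2r ?(support_value_gt0 hN c0 Hmax) // => qe.
by apply/le_anti; rewrite qe Hface.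
Qed.

Lemma face_peak_value_unique c e e' : face_peak c e -> face_peak c e' ->
  N (T e) = N (T e').
Proof.
move=> [Be He _ Fe] [Be' He' _ Fe'].
have d : dot e c = dot e' c by apply/le_anti; rewrite He' // He.
by apply/le_anti; rewrite Fe' // Fe.
Qed.

Lemma face_peak_opp c e : face_peak c e -> face_peak (- c) (- e).
Proof.
have hs := norm_seminorm hN.
have TN x : N (T (- x)) = N (T x) by rewrite linearN (seminormN hs).
move=> [Be He [_ ext] Fe]; split; rewrite ?(seminormN hs) //.
- move=> x Bx; rewrite !dotNr dotNl opprK -dotNl; apply: He.
  by rewrite (seminormN hs).
- split; first by rewrite (seminormN hs).
  move=> y z t Ny Nz t0 t1 ey; apply: oppr_inj.
  apply: (ext (- y) (- z) t); rewrite ?(seminormN hs) //.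
  by rewrite !scalerN -opprD -ey opprK.
- move=> x Bx; rewrite !dotNr dotNl opprK => dx.
  rewrite TN -(TN x); apply: Fe; first by rewrite (seminormN hs).
  by rewrite dotNl.
Qed.

End FacePeak.

Section Constancy.
Variables (R : realType) (n : nat).
Local Notation V := 'rV[R]_n.
Variable N : V -> R.
Hypothesis hN : is_norm N.
Variable T : {linear V -> V}.
Hypothesis hT : forall x, ext_ball N x -> preserves_bj_at N T x.
Variable E : V -> V.
Hypothesis HE : forall c, face_peak N T c (E c).

Let hTE c : preserves_bj_at N T (E c).
Proof. by case: (HE c) => _ _ ext _; exact: hT. Qed.

Let E_ball c : N (E c) <= 1. Proof. by case: (HE c). Qed.

Let E_max c x : N x <= 1 -> dot x c <= dot (E c) c.
Proof. by case: (HE c) => _ H _ _; exact: H. Qed.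

Let hE_ge0 c : 0 <= N (T (E c)).
Proof. exact: seminorm_ge0 (norm_seminorm hN) _. Qed.

(* The right-hand side telescopes along a subdivision of a segment. *)
Lemma support_gap_le c c' :
  dot (E c) c - dot (E c') c <= dot (E c') (c' - c) - dot (E c) (c' - c).
Proof. by have := E_max c' (E_ball c); rewrite !dotBr; lra. Qed.

Lemma face_peak_step c z mu : 0 < mu -> mu <= dot (E c) c -> N z <= 1 ->
  N (T (E c)) * (1 - (dot (E c) c - dot z c) / mu) <= N (T z).
Proof.
move=> mu0 mu_le Bz; set m := dot (E c) c in mu_le *.
set d := m - dot z c.
have d0 : 0 <= d by rewrite subr_ge0; exact: E_max.
have m0 : 0 < m := lt_le_trans mu0 mu_le.
have L := face_peak_ratio hN z (HE c) (@hTE c).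
rewrite -/m (_ : dot z c = m - d) in L; last by rewrite /d opprB addrC subrK.
rewrite -(ler_pM2r m0); apply: le_trans L.
rewrite -mulrA ler_wpM2l // mulrBl mul1r lerB //.
by rewrite mulrAC ler_pdivlMr // ler_wpM2l.
Qed.

Lemma face_peak_chain a b mu S k : 0 < mu ->
  (forall s, 0 <= s <= 1 -> mu <= dot (E (a + s *: (b - a))) (a + s *: (b - a))) ->
  (forall x, N x <= 1 -> `|dot x (b - a)| <= S) -> (0 < k)%N ->
  N (T (E a)) * (1 - 2 * S / k%:R / mu) <= N (T (E b)).
Proof.
move=> mu0 Hmu HS k0; have k0' : 0 < k%:R :> R by rewrite ltr0n.
pose c (i : nat) := a + (i%:R / k%:R) *: (b - a).
have c0 : c 0%N = a by rewrite /c mul0r scale0r addr0.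
have ck : c k = b by rewrite /c divff ?gt_eqF // scale1r addrC subrK.
have cS i : c i.+1 - c i = k%:R^-1 *: (b - a).
  by rewrite /c -natr1; apply/rowP => j; rewrite !mxE; ring.
pose d i := dot (E (c i)) (c i) - dot (E (c i.+1)) (c i).
pose s i := dot (E (c i)) (b - a).
have step i : (i < k)%N -> N (T (E (c i))) * (1 - d i / mu) <= N (T (E (c i.+1))).
  move=> ik; apply: face_peak_step => //; apply: Hmu.
  by rewrite divr_ge0 //= ler_pdivrMr // mul1r ler_nat ltnW.
have dle i : d i <= (s i.+1 - s i) / k%:R.
  by have := support_gap_le (c i) (c i.+1); rewrite cS !dotZr -mulrBr mulrC.
have sum_d : \sum_(i < k) d i <= 2 * S / k%:R.
  apply: (@le_trans _ _ (\sum_(i < k) ((s i.+1 - s i) / k%:R))).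
    by apply: ler_sum => i _; apply: dle.
  rewrite -mulr_suml -(big_mkord xpredT (fun i => s i.+1 - s i)) telescope_sumr //.
  rewrite ler_pM2r ?invr_gt0 //.
  have := HS _ (E_ball (c k)); have := HS _ (E_ball (c 0%N)); rewrite !ler_norml /s.
  move=> /andP[u2 _] /andP[_ u1]; lra.
have d0 i : 0 <= d i by rewrite subr_ge0; apply: E_max.
have := prod_lower_bound mu0 (fun i => hE_ge0 (c i)) d0 step.
rewrite c0 ck; apply: le_trans; apply: ler_wpM2l => //.
by rewrite lerD2l lerN2 ler_wpM2r // invr_ge0 ltW.
Qed.

Lemma face_peak_mono a b v : 0 < dot v a -> 0 < dot v b ->
  N (T (E a)) <= N (T (E b)).
Proof.
move=> va vb.
have v0 : v != 0 by apply: contraTneq va => ->; rewrite dot0l ltxx.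
have Nv := norm_gt0 hN v0.
set mu := Num.min (dot v a) (dot v b) / N v.
have mu0 : 0 < mu by rewrite divr_gt0 // lt_min va vb.
have Hmu s : 0 <= s <= 1 -> mu <= dot (E (a + s *: (b - a))) (a + s *: (b - a)).
  move=> /andP[s0 s1]; have Bv : N ((N v)^-1 *: v) <= 1 by rewrite norm_normalize.
  apply: le_trans (E_max _ Bv); rewrite dotZl /mu mulrC ler_wpM2l ?invr_ge0 ?(ltW Nv) //.
  rewrite dotDr dotZr dotBr; set m := Num.min _ _.
  have mA : (1 - s) * m <= (1 - s) * dot v a by rewrite ler_wpM2l ?subr_ge0 // ge_min lexx.
  have mB : s * m <= s * dot v b by rewrite ler_wpM2l // ge_min lexx orbT.
  lra.
have [S S0 HS] := unit_ball_dot_bounded hN (b - a).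
apply: (@ler_of_forall_natV _ _ _ (N (T (E a)) * (2 * S) / mu)).
  by apply: divr_ge0; [rewrite mulr_ge0 // mulr_ge0 | exact: ltW].
move=> k k0; have -> : N (T (E a)) - N (T (E a)) * (2 * S) / mu / k%:R =
  N (T (E a)) * (1 - 2 * S / k%:R / mu) by ring.
exact: face_peak_chain.
Qed.

Lemma face_peak_value_eq a b : a != 0 -> b != 0 -> 0 <= dot a b ->
  N (T (E a)) = N (T (E b)).
Proof.
move=> a0 b0 ab.
have va : 0 < dot (a + b) a by rewrite dotDl (dotC b a); have := dotxx_gt0 a0; lra.
have vb : 0 < dot (a + b) b by rewrite dotDl; have := dotxx_gt0 b0; lra.
by apply/le_anti; rewrite (face_peak_mono va vb) (face_peak_mono vb va).
Qed.

Lemma face_peak_value_const c0 c : c0 != 0 -> c != 0 -> N (T (E c)) = N (T (E c0)).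
Proof.
move=> c00 c1; have [h|h] := lerP 0 (dot c0 c); first by rewrite (face_peak_value_eq c00 c1 h).
have c1' : - c != 0 by rewrite oppr_eq0.
have h' : 0 <= dot c0 (- c) by rewrite dotNr; lra.
rewrite (face_peak_value_eq c00 c1' h').
rewrite (face_peak_value_unique (HE (- c)) (face_peak_opp hN (HE c))).
by rewrite linearN (seminormN (norm_seminorm hN)).
Qed.

Lemma norm_image_on_sphere c0 z : c0 != 0 -> N z = 1 -> N (T z) = N (T (E c0)).
Proof.
move=> c00 Nz; set lam := N (T (E c0)).
have hs := norm_linear_seminorm hN T.
set C := \sum_(j < n) N (T 'e_j).
have C0 : 0 <= C by apply: sumr_ge0 => j _; exact: seminorm_ge0 hs _.
suff : `|N (T z) - lam| <= 0 by rewrite normr_le0 subr_eq0 => /eqP.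
apply: (@ler_of_forall_natV _ _ _ (N (T z) + C * enorm z)).
  by rewrite addr_ge0 ?mulr_ge0 ?sqrtr_ge0 //; exact: seminorm_ge0 hs _.
move=> k k0; set eps := k%:R^-1.
have eps0 : 0 < eps by rewrite invr_gt0 ltr0n.
have [q [c [c_neq0 Bq Hq near]]] := exists_support_point_near hN Nz eps0.
have Tq : N (T q) = lam.
  by rewrite (face_peak_support_value hN (HE c) (@hTE c) c_neq0 Bq Hq) (face_peak_value_const c00 c_neq0).
rewrite -Tq subr_le0 -/eps mulrC.
apply: le_trans (seminorm_distB hs _ _) _ => /=.
have -> : z - q = - eps *: z + ((1 + eps) *: z - q).
  by apply/rowP => j; rewrite !mxE; ring.
apply: le_trans (seminormD hs _ _) _.
rewrite linearZ (seminormZ (norm_seminorm hN)) normrN (ger0_norm (ltW eps0)) mulrDr lerD2l.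
apply: le_trans (seminorm_le_coord hs (@coord_le_enorm _ _) _) _.
by rewrite -/C mulrCA ler_wpM2l.
Qed.

End Constancy.

Theorem mainTheorem15 (R : realType) (n : nat) (N : 'rV[R]_n -> R)
  (hN : is_norm N) (T : {linear 'rV[R]_n -> 'rV[R]_n}) :
  (forall x, ext_ball N x -> preserves_bj_at N T x) ->
  exists lam : R, 0 <= lam /\ forall x, N (T x) = lam * N x.
Proof.
move=> hT; have hs := norm_seminorm hN.
have [E HE] := choice (exists_face_peak hN T).
have [[c0 c00]|trivial] := pselect (exists c0 : 'rV[R]_n, c0 != 0); last first.
  exists 0; split => // x; have -> : x = 0 by apply: contra_notP trivial => /eqP x0; exists x.
  by rewrite linear0 !(seminorm0 hs) mul0r.
exists (N (T (E c0))); split => [|x]; first exact: seminorm_ge0 hs _.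
have [->|x0] := eqVneq x 0; first by rewrite linear0 (seminorm0 hs) mulr0.
have := norm_image_on_sphere hN hT HE c00 (norm_normalize hN x0).
rewrite linearZ (seminormZ hs) ger0_norm ?invr_ge0 ?(seminorm_ge0 hs) // => <-.
by rewrite mulrAC mulVf ?mul1r // gt_eqF // norm_gt0.
Qed.
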